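(* Let $A\in\mathbb{C}^{n\times n}$, and fix $A^-\in A\{1\}$ and $A^{GD}\in A\{GD\}$. For $X\in\mathbb{C}^{n\times n}$ the following are equivalent: (i) $X = A^{-}AA^{GD}$; (ii) $XAX =X$, $XA= A^{-}A$, $AX = AA^{GD}$, and $AXA = A$; (iii) $XAX =X$, $XA= A^{-}A$, and $AX = AA^{GD}$; (iv) $A^{-}AX =X$, $XA= A^{-}A$, $AX = AA^{GD}$, and $XAA^{GD} = X$.
   Context: For $A\in\mathbb{C}^{n\times n}$, $ind(A)$ is the smallest nonnegative integer $k$ with $\mathrm{rank}(A^k)=\mathrm{rank}(A^{k+1})$. $A\{1\}$ is the set of matrices $X$ with $AXA=A$. With $k=ind(A)$, $A\{GD\}$ is the set of G-Drazin inverses of $A$: matrices $X$ with $AXA=A$, $XA^{k+1}=A^k$, $A^{k+1}X=A^k$. *)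

From mathcomp Require Import all_boot all_order all_algebra.
From mathcomp Require Import reals.
From mathcomp Require Export complex.
Set Implicit Arguments. Unset Strict Implicit. Unset Printing Implicit Defensive.
Import GRing.Theory Num.Theory.
Local Open Scope ring_scope.

Definition mxpow (F : pzRingType) (n : nat) (A : 'M[F]_n) (k : nat) : 'M[F]_n :=
  iter k (mulmx A) 1%:M.

Lemma ind_ex (F : fieldType) (n : nat) (A : 'M[F]_n) :
  exists k, \rank (mxpow A k) == \rank (mxpow A k.+1).
Proof.
have dec k : (\rank (mxpow A k.+1) <= \rank (mxpow A k))%N.
  by rewrite /mxpow iterS mxrankM_maxr.
have [[k /= Hk]|H] := pickP (fun k : 'I_n.+1 =>
   \rank (mxpow A k) == \rank (mxpow A k.+1)); first by exists k.
suff: forall k, (\rank (mxpow A k) + k <= n)%N.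
  by move/(_ n.+1); rewrite addnS ltnNge leq_addl.
elim=> [|k IH]; first by rewrite addn0 rank_leq_row.
have kn : (k < n.+1)%N by rewrite ltnS (leq_trans _ IH) // leq_addl.
have := H (Ordinal kn); have := dec k; rewrite addnS /= => d ne.
apply: leq_trans IH; rewrite -addSn leq_add2r ltn_neqAle d andbT.
by apply/negP => /eqP e; move: ne; rewrite e eqxx.
Qed.

Definition ind (F : fieldType) (n : nat) (A : 'M[F]_n) : nat :=
  ex_minn (ind_ex A).

Definition inner_inverse (F : fieldType) (n : nat) (A X : 'M[F]_n) : Prop :=
  A *m X *m A = A.

Definition GD_inverse (F : fieldType) (n : nat) (A X : 'M[F]_n) : Prop :=
  let k := ind A in
  [/\ A *m X *m A = A,
      X *m mxpow A k.+1 = mxpow A k &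
      mxpow A k.+1 *m X = mxpow A k].

From mathcomp Require Import all_boot all_order all_algebra.
From mathcomp Require Import reals complex.
Import GRing.Theory Num.Theory.
Local Open Scope ring_scope.

(* Each condition forces [x a = am a] and [x = x a ag] (from [x a x = x]
   and [a x = a ag]), whence [x = am a ag]. *)

Section InnerInverseProduct.

Variables (T : pzRingType) (a am ag x : T).
Hypotheses (a_am_a : a * am * a = a) (a_ag_a : a * ag * a = a).

Lemma mulr_a_am_a (b : T) : b * a * am * a = b * a.
Proof. by rewrite -!mulrA (mulrA a am a) a_am_a. Qed.

Lemma mulr_a_ag_a (b : T) : b * a * ag * a = b * a.
Proof. by rewrite -!mulrA (mulrA a ag a) a_ag_a. Qed.

Lemma inner_inverse_product_tfae :
  [<-> x = am * a * ag;
       [/\ x * a * x = x, x * a = am * a, a * x = a * ag & a * x * a = a];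
       [/\ x * a * x = x, x * a = am * a & a * x = a * ag];
       [/\ am * a * x = x, x * a = am * a, a * x = a * ag & x * a * ag = x]].
Proof.
tfae.
- move=> ->; split.
  + by rewrite mulr_a_ag_a !mulrA mulr_a_am_a.
  + by rewrite mulr_a_ag_a.
  + by rewrite !mulrA a_am_a.
  + by rewrite !mulrA a_am_a a_ag_a.
- by case.
- move=> [xax xa ax]; split=> //.
  + by rewrite -xa.
  + by rewrite -mulrA -ax mulrA.
- by move=> [_ xa _ <-]; rewrite xa.
Qed.

End InnerInverseProduct.

Theorem theorem3p8 (R : realType) (n : nat) (A Am AGD X : 'M[R[i]]_n) :
  inner_inverse A Am -> GD_inverse A AGD ->
  [<-> X = Am *m A *m AGD;
       [/\ X *m A *m X = X, X *m A = Am *m A, A *m X = A *m AGD & A *m X *m A = A];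
       [/\ X *m A *m X = X, X *m A = Am *m A & A *m X = A *m AGD];
       [/\ Am *m A *m X = X, X *m A = Am *m A, A *m X = A *m AGD & X *m A *m AGD = X]].
Proof.
rewrite /inner_inverse => A_Am_A [A_AGD_A _ _].
rewrite !mulmxE in A_Am_A A_AGD_A *.
exact: inner_inverse_product_tfae.
Qed.
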